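(* Let $\Phi$ be a symmetric norming function such that $\mathfrak{S}_\Phi$ satisfies condition $(\ast)$ or condition $(\ast\ast)$. Then the limit \[p=\lim_{n\to\infty}\frac{\log n}{\log\|P_n\|_\Phi}\in[1,\infty]\] exists, where $P_n$ denotes any rank $n$ projection.
   Context: A symmetric norming (s.n.) function is a norm $\Phi$ on finitely supported real sequences with $\Phi(1,0,\ldots)=1$, invariant under permutations and absolute values; it extends to $c_\Phi=\{\xi\in c_0:\sup_n\Phi(\xi_1,\ldots,\xi_n,0,\ldots)<\infty\}$ by limits. $\mathfrak{S}_\Phi$ is the set of compact operators $x$ on a separable infinite-dimensional Hilbert space $H$ with singular numbers $s(x)\in c_\Phi$, normed by $\|x\|_\Phi=\Phi(s(x))$ (so $\|P_n\|_\Phi=\Phi(1,\ldots,1,0,\ldots)$ with $n$ ones). For $x,y$ on $H$, $x\otimes y$ acts on $H\otimes H$, identified with $H$. Condition $(\ast)$: there is $c_1\ge0$ with $\|x\otimes y\|_\Phi\le c_1\|x\|_\Phi\|y\|_\Phi$ for all $x,y\in\mathfrak{S}_\Phi$. Condition $(\ast\ast)$: there is $c_2>0$ with $\|x\otimes y\|_\Phi\ge c_2\|x\|_\Phi\|y\|_\Phi$ for all $x,y\in\mathfrak{S}_\Phi$. *)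

From Stdlib Require Cantor.
From HB Require Import structures.
From mathcomp Require Import all_boot all_order all_algebra.
From mathcomp Require Import all_classical all_reals all_analysis.
Set Implicit Arguments. Unset Strict Implicit. Unset Printing Implicit Defensive.
Import Order.TTheory GRing.Theory Num.Theory.
Import numFieldNormedType.Exports.
Local Open Scope ring_scope.
Local Open Scope classical_set_scope.

Section SN.
Variable R : realType.

Definition finsupp (x : nat -> R) : Prop :=
  exists N : nat, forall n : nat, (N <= n)%N -> x n = 0.

Definition trunc (n : nat) (x : nat -> R) : nat -> R :=
  fun k => if (k < n)%N then x k else 0.

Definition is_snf (Phi : (nat -> R) -> R) : Prop :=
  (forall x, finsupp x -> Phi x = 0 -> forall n, x n = 0) /\
  (forall (a : R) x, finsupp x -> Phi (fun n => a * x n) = `|a| * Phi x) /\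
  (forall x y, finsupp x -> finsupp y ->
      Phi (fun n => x n + y n) <= Phi x + Phi y) /\
  Phi (fun n => if n == 0%N then 1 else 0) = 1 /\
  (forall x (s : nat -> nat), finsupp x -> bijective s -> Phi (x \o s) = Phi x) /\
  (forall x, finsupp x -> Phi (fun n => `|x n|) = Phi x).

Definition in_cPhi (Phi : (nat -> R) -> R) (x : nat -> R) : Prop :=
  x @ \oo --> (0 : R) /\
  exists M : R, forall n : nat, Phi (trunc n x) <= M.

Definition Phi_ext (Phi : (nat -> R) -> R) (x : nat -> R) : R :=
  lim ((fun n => Phi (trunc n x)) @ \oo).

(* the possible singular-number sequences of elements of S_Phi:
   nonnegative, nonincreasing, in c_Phi *)
Definition snum_seq (Phi : (nat -> R) -> R) (x : nat -> R) : Prop :=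
  (forall n, 0 <= x n) /\ (forall n, x n.+1 <= x n) /\ in_cPhi Phi x.

(* singular numbers of x (x) y, enumerated via the Cantor bijection
   nat -> nat * nat (any enumeration gives the same Phi-value) *)
Definition seq_tensor (x y : nat -> R) : nat -> R :=
  fun k => x (Cantor.of_nat k).1 * y (Cantor.of_nat k).2.

Definition cond_star (Phi : (nat -> R) -> R) : Prop :=
  exists c1 : R, 0 <= c1 /\
    forall x y, snum_seq Phi x -> snum_seq Phi y ->
      in_cPhi Phi (seq_tensor x y) /\
      Phi_ext Phi (seq_tensor x y) <= c1 * Phi_ext Phi x * Phi_ext Phi y.

(* condition (star-star) (when x (x) y is not in S_Phi its norm is infinite and the
   inequality holds trivially) *)
Definition cond_star2 (Phi : (nat -> R) -> R) : Prop :=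
  exists c2 : R, 0 < c2 /\
    forall x y, snum_seq Phi x -> snum_seq Phi y ->
      in_cPhi Phi (seq_tensor x y) ->
      c2 * Phi_ext Phi x * Phi_ext Phi y <= Phi_ext Phi (seq_tensor x y).

Definition normP (Phi : (nat -> R) -> R) (n : nat) : R :=
  Phi (fun k => if (k < n)%N then 1 else 0).

Definition pratio (Phi : (nat -> R) -> R) (n : nat) : \bar R :=
  if ln (normP Phi n) == 0 then +oo%E
  else ((ln (n%:R : R)) / ln (normP Phi n))%:E.

End SN.

From HB Require Import structures.
From mathcomp Require Import all_boot all_order all_algebra.
From mathcomp Require Import all_classical all_reals all_analysis.
From Stdlib Require Cantor.
From mathcomp Require Import lra ring zify.
Set Implicit Arguments. Unset Strict Implicit. Unset Printing Implicit Defensive.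
Import Order.TTheory GRing.Theory Num.Theory.
Import numFieldNormedType.Exports.
Local Open Scope ring_scope.
Local Open Scope classical_set_scope.

(* Since P_m (x) P_n is a projection of rank mn, condition (star) resp. (star-star)
   says that n |-> ||P_n|| is submultiplicative resp. supermultiplicative up to a
   constant factor.  So a(n) = log ||P_n||, which is nondecreasing with
   0 <= a(n) <= log n, is subadditive resp. superadditive over products up to a
   constant.  Squeezing n between consecutive powers of a fixed k and arguing as in
   Fekete's lemma shows that a(n) / log n converges to some l in [0, 1]; then
   p = 1 / l. *)

Lemma natr_ln_ge0 (R : realType) (n : nat) : 0 <= ln (n%:R : R).
Proof. by case: n => [|n]; [rewrite ln0 | apply: ln_ge0; rewrite ler1n]. Qed.

Lemma natr_ln_gt0 (R : realType) (n : nat) : (1 < n)%N -> 0 < ln (n%:R : R).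
Proof. by move=> n1; rewrite ln_gt0 // ltr1n. Qed.

Lemma natr_lnX (R : realType) (k j : nat) :
  (0 < k)%N -> ln ((k ^ j)%:R : R) = j%:R * ln (k%:R : R).
Proof. by move=> k0; rewrite natrX lnXn ?ltr0n // mulr_natl. Qed.

Lemma natr_ln_le (R : realType) (m n : nat) :
  (0 < m)%N -> (m <= n)%N -> ln (m%:R : R) <= ln (n%:R : R).
Proof. by move=> m0 mn; rewrite ler_ln ?posrE ?ltr0n ?ler_nat // (leq_trans m0). Qed.

Lemma lnM3 (R : realType) (x y z : R) :
  0 < x -> 0 < y -> 0 < z -> ln (x * y * z) = ln x + ln y + ln z.
Proof. by move=> x0 y0 z0; rewrite !lnM ?posrE ?mulr_gt0. Qed.

Lemma div_ln_natr_cvg0 (R : realType) (y : R) : y / ln (n%:R : R) @[n --> \oo] --> 0.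
Proof.
have ln_cvgy : ln (n%:R : R) @[n --> \oo] --> +oo.
  apply/cvgryPge => A; near=> n.
  rewrite -ler_expR lnK ?posrE ?ltr0n //; near: n; last exact: nbhs_infty_gt.
  exact: nbhs_infty_ger.
have /gtr0_cvgV0 inv_cvg0 : \forall n \near \oo, 0 < ln (n%:R : R).
  by near=> n; apply: natr_ln_gt0; near: n; exact: nbhs_infty_gt.
rewrite -(mulr0 y); apply: cvgMl_tmp; apply/inv_cvg0; exact: ln_cvgy.
Unshelve. all: end_near.
Qed.

Lemma ln_ratio_bracket (R : realType) (k n m : nat) : (1 < k)%N ->
  (k ^ m.-1 <= n <= k ^ m.+1)%N ->
  `|m%:R - ln (n%:R : R) / ln (k%:R : R)| <= 1.
Proof.
move=> k1 /andP[lo hi]; have k0 : (0 < k)%N := ltnW k1.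
have K0 := natr_ln_gt0 R k1.
have kX0 j : (0 < k ^ j)%N by rewrite expn_gt0 k0.
have lnn_ge : m.-1%:R * ln (k%:R : R) <= ln (n%:R : R) by rewrite -natr_lnX // natr_ln_le.
have lnn_le : ln (n%:R : R) <= m.+1%:R * ln (k%:R : R).
  by rewrite -natr_lnX // natr_ln_le // (leq_trans (kX0 _) lo).
have pred_ge : m%:R - 1 <= m.-1%:R :> R.
  by case: (m) => [|j]; rewrite ?subr_le0 //= -natr1 addrK.
have r_le : ln (n%:R : R) / ln (k%:R : R) <= m%:R + 1 by rewrite ler_pdivrMr // natr1.
have r_ge : m%:R - 1 <= ln (n%:R : R) / ln (k%:R : R).
  by rewrite ler_pdivlMr //; apply: le_trans _ lnn_ge; apply: ler_wpM2r => //; exact: ltW.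
by rewrite ler_norml; apply/andP; split; lra.
Qed.

Lemma cvg_inf_envelope (R : realType) (u g : nat -> R) (L : R) :
  (forall n, L <= u n) ->
  (forall k e, (1 < k)%N -> 0 < e -> \forall n \near \oo, u n <= g k + e) ->
  (forall e, 0 < e -> \forall n \near \oo, g n - e <= u n) ->
  u @ \oo --> inf [set g k | k in [set k | (1 < k)%N]].
Proof.
move=> u_ge u_le_g g_le_u; set G := [set g k | k in _].
have g_ge k : (1 < k)%N -> L <= g k.
  move=> k1; apply/ler_addgt0Pr => e e0.
  have [n /= un] := filter_ex (u_le_g k e k1 e0).
  exact: le_trans (u_ge n) un.
have G_inf : has_inf G.
  by split; [exists (g 2%N), 2%N | exists L => _ [k k1 <-]; exact: g_ge].
apply/cvgrPdist_le => e e0.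
have [_ [k /= k1 <-] gk] := inf_adherent (divr_gt0 e0 (ltr0n _ 2)) G_inf.
near=> n.
have un_le : u n <= g k + e / 2 by near: n; apply: u_le_g => //; rewrite divr_gt0.
have gn_le : g n - e <= u n by near: n; exact: g_le_u.
have inf_le : inf G <= g n.
  by apply: ge_inf; [case: G_inf | exists n => //; near: n; exact: nbhs_infty_gt].
rewrite ler_distlC; apply/andP; split; lra.
Unshelve. all: end_near.
Qed.

Section LnRatioLimit.
Variables (R : realType) (w : nat -> R) (c L : R).
Hypothesis w_mul : forall m n, (0 < m)%N -> (0 < n)%N -> w (m * n) <= w m + w n + c.
Hypothesis ratio_ge : forall n, L <= w n / ln (n%:R : R).

Lemma w_expn k m : (0 < k)%N -> (0 < m)%N -> w (k ^ m) <= m%:R * (w k + c) - c.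
Proof.
move=> k0; elim: m => [//|m IH] _.
have [->|m0] := posnP m; first by rewrite expn1 mul1r addrK.
have km0 : (0 < k ^ m)%N by rewrite expn_gt0 k0.
have := w_mul km0 k0; rewrite -expnSr -natr1 mulrDl mul1r.
by have := IH m0; lra.
Qed.

(* From w (k ^ m) <= m (w k + c) - c and |m - ln n / ln k| <= 1, the ratio is
   eventually below (w k + c) / ln k + e; the limit is the infimum of these bounds. *)
Lemma cvg_ln_ratio_power_bracket :
  (forall k n, (1 < k)%N -> (k <= n)%N -> exists2 m, (0 < m)%N &
     (k ^ m.-1 <= n <= k ^ m.+1)%N /\ w n <= w (k ^ m)) ->
  exists l : R, w n / ln (n%:R : R) @[n --> \oo] --> l.
Proof.
move=> bracket; exists (inf [set (w k + c) / ln (k%:R : R) | k in [set k | (1 < k)%N]]).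
apply: cvg_inf_envelope ratio_ge _ _.
  move=> k e k1 e0; set K := ln (k%:R : R); set Y := w k + c.
  have K0 : 0 < K := natr_ln_gt0 R k1.
  near=> n.
  have small : (`|Y| - c) / ln (n%:R : R) <= e.
    by near: n; exact: cvgr_le 0 (div_ln_natr_cvg0 _) _ e0.
  have kn : (k <= n)%N by near: n; exact: nbhs_infty_ge.
  have A0 : 0 < ln (n%:R : R) := natr_ln_gt0 R (leq_trans k1 kn).
  set A := ln (n%:R : R) in A0 small *.
  have [m m0 [/(ln_ratio_bracket R k1) m_near w_le]] := bracket k n k1 kn.
  have mY_le : m%:R * Y <= Y * (A / K) + `|Y|.
    rewrite -lerBlDl mulrC -mulrBr; apply: le_trans (ler_norm _) _.
    by rewrite normrM ler_piMr.
  have wn_le : w n <= Y * (A / K) + (`|Y| - c).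
    by have := w_expn (ltnW k1) m0; rewrite -/Y; lra.
  have : w n / A <= Y / K + (`|Y| - c) / A.
    by rewrite ler_pdivrMr // mulrDl divfK ?gt_eqF // mulrAC -mulrA.
  lra.
move=> e e0; near=> n.
have small : c / ln (n%:R : R) <= e by near: n; exact: cvgr_le 0 (div_ln_natr_cvg0 _) _ e0.
rewrite mulrDl; lra.
Unshelve. all: end_near.
Qed.

Lemma cvg_ln_ratio_nondecreasing : {homo w : m n / (m <= n)%N >-> m <= n} ->
  exists l : R, w n / ln (n%:R : R) @[n --> \oo] --> l.
Proof.
move=> w_up; apply: cvg_ln_ratio_power_bracket => k n k1 kn.
have /andP[lo hi] := trunc_log_bounds k1 (leq_trans (ltnW k1) kn).
exists (trunc_log k n).+1 => //=; split; last exact/w_up/ltnW.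
by rewrite lo /= (leq_trans (ltnW hi)) // leq_pexp2l // ltnW.
Qed.

Lemma cvg_ln_ratio_nonincreasing : {homo w : m n / (m <= n)%N >-> n <= m} ->
  exists l : R, w n / ln (n%:R : R) @[n --> \oo] --> l.
Proof.
move=> w_down; apply: cvg_ln_ratio_power_bracket => k n k1 kn.
have /andP[lo hi] := trunc_log_bounds k1 (leq_trans (ltnW k1) kn).
exists (trunc_log k n); first by rewrite trunc_log_gt0 k1 /=; lia.
split; last exact: w_down.
by rewrite (leq_trans _ lo) ?leq_pexp2l ?leq_pred ?(ltnW k1) //= ltnW.
Qed.

End LnRatioLimit.

Definition einv (R : realType) (x : R) : \bar R := if x == 0 then +oo%E else (x^-1)%:E.

Lemma einv_ge1 (R : realType) (x : R) : 0 <= x <= 1 -> (1 <= einv x)%E.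
Proof.
case/andP=> x_ge0 x_le1; rewrite /einv; case: eqVneq => [_|x_neq0]; first exact: leey.
by rewrite lee_fin invf_ge1 // lt_neqAle eq_sym x_neq0.
Qed.

Lemma cvg_einv (R : realType) (T : Type) (F : set_system T) {FF : ProperFilter F}
    (u : T -> R) (l : R) :
  (\forall t \near F, 0 <= u t) -> u @ F --> l -> einv (u t) @[t --> F] --> einv l.
Proof.
move=> u_ge0 u_cvg; have l_ge0 : 0 <= l := cvgr_to_ge u_cvg u_ge0.
rewrite /einv; case: eqVneq => [l0 | l_neq0].
  apply/cvgeyPge => A; set B := Num.max A 1.
  have B0 : 0 < B by rewrite lt_max ltr01 orbT.
  near=> t; case: eqVneq => [_|ut_neq0]; first exact: leey.
  have ut_gt0 : 0 < u t by rewrite lt_neqAle eq_sym ut_neq0; near: t.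
  have ut_le : u t <= B^-1 by near: t; apply: cvgr_le u_cvg _ _; rewrite l0 invr_gt0.
  rewrite lee_fin (@le_trans _ _ B) ?le_max ?lexx // -[B]invrK lef_pV2 ?posrE ?invr_gt0 //.
have l_gt0 : 0 < l by rewrite lt_neqAle eq_sym l_neq0 l_ge0.
have ut_gt0 : \forall t \near F, 0 < u t by apply: cvgr_gt u_cvg _ l_gt0.
apply: (@cvg_trans _ (((u t)^-1)%:E @[t --> F])).
  by apply: near_eq_cvg; near=> t; rewrite gt_eqF //; near: t.
by apply: cvg_EFin; [near=> t | exact: cvgV].
Unshelve. all: end_near.
Qed.

Definition swapn (i j k : nat) : nat := if k == i then j else if k == j then i else k.

Lemma swapnK i j : involutive (swapn i j).
Proof.
move=> k; rewrite /swapn.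
have [->|ki] := eqVneq k i; first by rewrite eqxx; case: eqVneq.
have [->|kj] := eqVneq k j; first by rewrite eqxx.
by rewrite (negbTE ki) (negbTE kj).
Qed.

Lemma sum_swapn (F : nat -> nat) M i j : (i < M)%N -> (j < M)%N ->
  (\sum_(k < M) F (swapn i j k) = \sum_(k < M) F k)%N.
Proof.
move=> iM jM; have swapn_lt k : (k < M)%N -> (swapn i j k < M)%N.
  by rewrite /swapn; case: ifP => // _; case: ifP.
pose s (k : 'I_M) := Ordinal (swapn_lt k (ltn_ord k)).
have s_inj : injective s by move=> k k' /(congr1 val) /(can_inj (swapnK i j)) /val_inj.
by rewrite [RHS](reindex_inj s_inj).
Qed.

Definition in_rect (m n k : nat) : bool :=
  ((Cantor.of_nat k).1 < m)%N && ((Cantor.of_nat k).2 < n)%N.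

Lemma cantor_to_nat_lt m n a b :
  (a < m)%N -> (b < n)%N -> (Cantor.to_nat (a, b) < (m + n).+1 ^ 2)%N.
Proof.
move=> am bn; have := Cantor.to_nat_spec a b.
rewrite -(ltn_pmul2r (isT : 0 < 2)%N); nia.
Qed.

Lemma in_rect_lt m n k : in_rect m n k -> (k < (m + n).+1 ^ 2)%N.
Proof.
rewrite /in_rect -{3}(Cantor.cancel_to_of k).
by case: (Cantor.of_nat k) => a b /andP[]; apply: cantor_to_nat_lt.
Qed.

Lemma card_in_rect m n :
  #|[set k : 'I_((m + n).+1 ^ 2) | in_rect m n k]%SET| = (m * n)%N.
Proof.
pose f (p : 'I_m * 'I_n) := Ordinal (cantor_to_nat_lt (ltn_ord p.1) (ltn_ord p.2)).
have f_inj : injective f.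
  move=> [a b] [a' b'] /(congr1 val) /(can_inj Cantor.cancel_of_to) [].
  by move=> /val_inj -> /val_inj ->.
suff -> : [set k : 'I__ | in_rect m n k]%SET = (f @: [set: 'I_m * 'I_n])%SET.
  by rewrite card_imset // cardsT card_prod !card_ord.
apply/setP => k; rewrite inE; apply/idP/imsetP => [/andP[am bn]|[[a b] _ ->]].
  have kE : val k = Cantor.to_nat ((Cantor.of_nat k).1, (Cantor.of_nat k).2).
    by rewrite -surjective_pairing Cantor.cancel_to_of.
  by exists (Ordinal am, Ordinal bn) => //; apply: val_inj.
by rewrite /in_rect Cantor.cancel_of_to /= !ltn_ord.
Qed.

Section Sequences.
Variable R : realType.

Definition proj_seq (n : nat) : nat -> R := fun k => if (k < n)%N then 1 else 0.

Definition unit_seq (n : nat) : nat -> R := fun k => if k == n then 1 else 0.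

Definition supp_count (x : nat -> R) (N : nat) : nat := (\sum_(k < N) (x k != 0%R))%N.

Lemma finsupp_proj_seq n : finsupp (proj_seq n).
Proof. by exists n => k; rewrite /proj_seq ltnNge => ->. Qed.

Lemma finsupp_unit_seq n : finsupp (unit_seq n).
Proof. by exists n.+1 => k; rewrite /unit_seq; case: eqVneq => // ->; rewrite ltnn. Qed.

Lemma finsuppD (x y : nat -> R) : finsupp x -> finsupp y -> finsupp (fun n => x n + y n).
Proof.
move=> [N xN] [M yM]; exists (maxn N M) => k; rewrite geq_max => /andP[Nk Mk].
by rewrite xN // yM // addr0.
Qed.

Lemma proj_seqS n : proj_seq n.+1 = fun k => proj_seq n k + unit_seq n k.
Proof.
apply/funext => k; rewrite /proj_seq /unit_seq ltnS leq_eqVlt.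
by case: ltngtP => //= _; rewrite ?addr0 ?add0r.
Qed.

Lemma trunc_finsupp (x : nat -> R) N n : (forall k, (N <= k)%N -> x k = 0) ->
  (N <= n)%N -> trunc n x = x.
Proof.
move=> xN Nn; apply/funext => k; rewrite /trunc; case: ltnP => // nk.
by rewrite xN // (leq_trans Nn nk).
Qed.

Lemma Phi_trunc_finsupp (Phi : (nat -> R) -> R) (x : nat -> R) :
  finsupp x -> Phi (trunc n x) @[n --> \oo] --> Phi x.
Proof.
move=> [N xN]; apply: cvg_near_cst; near=> n.
by rewrite (trunc_finsupp xN) //; near: n; exact: nbhs_infty_ge.
Unshelve. all: end_near.
Qed.

Lemma Phi_ext_finsupp (Phi : (nat -> R) -> R) x : finsupp x -> Phi_ext Phi x = Phi x.
Proof. by move=> x_fin; apply: cvg_lim => //; exact: Phi_trunc_finsupp. Qed.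

Lemma in_cPhi_finsupp (Phi : (nat -> R) -> R) x : finsupp x -> in_cPhi Phi x.
Proof.
move=> x_fin; split.
  case: x_fin => N xN; apply: cvg_near_cst; near=> n.
  by apply: xN; near: n; exact: nbhs_infty_ge.
have [M /= PhiM] := (ex_bound _ (PF := globally_properfilter (a := 0%N) I)).1
  (cvg_seq_bounded (cvgP _ (Phi_trunc_finsupp (Phi := Phi) x_fin))).
by exists M => n; apply: le_trans (ler_norm _) (PhiM n _).
Unshelve. all: end_near.
Qed.

Lemma Phi_ext_proj (Phi : (nat -> R) -> R) n : Phi_ext Phi (proj_seq n) = normP Phi n.
Proof. exact/Phi_ext_finsupp/finsupp_proj_seq. Qed.

Lemma snum_seq_proj (Phi : (nat -> R) -> R) n : snum_seq Phi (proj_seq n).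
Proof.
split; first by move=> k; rewrite /proj_seq; case: ifP.
split; last exact/in_cPhi_finsupp/finsupp_proj_seq.
by move=> k; rewrite /proj_seq; case: ifP => [/ltnW ->|_]; last case: ifP.
Qed.

Lemma supp_count_proj_seq n : supp_count (proj_seq n) n = n.
Proof.
rewrite /supp_count (eq_bigr (fun=> 1%N)) => [|k _].
  by rewrite big_const_ord iter_addn_0 mul1n.
by rewrite /proj_seq ltn_ord oner_eq0.
Qed.

Lemma seq_tensor_proj m n k :
  seq_tensor (proj_seq m) (proj_seq n) k = if in_rect m n k then 1 else 0.
Proof. by rewrite /seq_tensor /proj_seq /in_rect; do 2 case: ifP; rewrite ?mulr1 ?mulr0. Qed.

Lemma tensor_proj_out m n k : ((m + n).+1 ^ 2 <= k)%N ->
  seq_tensor (proj_seq m) (proj_seq n) k = 0.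
Proof. by rewrite seq_tensor_proj leqNgt; case: ifP => // /in_rect_lt ->. Qed.

Lemma finsupp_tensor_proj m n : finsupp (seq_tensor (proj_seq m) (proj_seq n)).
Proof. by exists ((m + n).+1 ^ 2)%N => k; apply: tensor_proj_out. Qed.

Lemma supp_count_tensor_proj m n :
  supp_count (seq_tensor (proj_seq m) (proj_seq n)) ((m + n).+1 ^ 2) = (m * n)%N.
Proof.
rewrite -card_in_rect -sum1_card big_mkcond /supp_count; apply: eq_bigr => k _.
by rewrite seq_tensor_proj inE; case: ifP; rewrite ?oner_eq0 ?eqxx.
Qed.

End Sequences.

Section SymmetricNormingFunction.
Variables (R : realType) (Phi : (nat -> R) -> R).
Hypothesis Phi_snf : is_snf Phi.

Let Phi_scale a x : finsupp x -> Phi (fun n => a * x n) = `|a| * Phi x.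
Proof. by case: Phi_snf => _ [scale _]; exact: scale. Qed.

Let Phi_triangle x y : finsupp x -> finsupp y ->
  Phi (fun n => x n + y n) <= Phi x + Phi y.
Proof. by case: Phi_snf => _ [_ [triangle _]]; exact: triangle. Qed.

Let Phi_perm x s : finsupp x -> bijective s -> Phi (x \o s) = Phi x.
Proof. by case: Phi_snf => _ [_ [_ [_ [perm _]]]]; exact: perm. Qed.

Let Phi_abs x : finsupp x -> Phi (fun n => `|x n|) = Phi x.
Proof. by case: Phi_snf => _ [_ [_ [_ [_ abs]]]]; exact: abs. Qed.

Lemma normP0 : normP Phi 0 = 0.
Proof.
have := Phi_scale 0 (finsupp_proj_seq R 0); rewrite normr0 mul0r => <-.
by congr Phi; apply/funext => k; rewrite mul0r.
Qed.

Lemma Phi_swapn x i j : finsupp x -> Phi (x \o swapn i j) = Phi x.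
Proof. by move=> x_fin; apply: Phi_perm => //; exists (swapn i j); exact: swapnK. Qed.

Lemma Phi_unit_seq n : Phi (unit_seq R n) = 1.
Proof.
case: Phi_snf => _ [_ [_ [<- _]]]; rewrite -(Phi_swapn 0 n (finsupp_unit_seq R n)).
congr Phi; apply/funext => k; rewrite /= /unit_seq /swapn.
have [_|k0] := eqVneq k 0%N; first by rewrite eqxx.
by have [<-|kn] := eqVneq k n; rewrite ?(negbTE kn) // eq_sym (negbTE k0).
Qed.

Lemma normP_succ_le n : normP Phi n.+1 <= normP Phi n + 1.
Proof.
rewrite -(Phi_unit_seq n) /normP -/(proj_seq R n.+1) proj_seqS.
exact: Phi_triangle (finsupp_proj_seq R n) (finsupp_unit_seq R n).
Qed.

(* P_n is the midpoint of P_(n+1) and y = P_n - e_n, and |y| = P_(n+1). *)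
Lemma normP_le_succ n : normP Phi n <= normP Phi n.+1.
Proof.
pose y k := proj_seq R n k - unit_seq R n k.
have y_fin : finsupp y.
  exists n.+1 => k nk.
  by rewrite /y /proj_seq /unit_seq ltnNge (ltnW nk) gtn_eqF // subrr.
have Phi_y : Phi y = normP Phi n.+1.
  rewrite -Phi_abs // /normP -/(proj_seq R n.+1) proj_seqS; congr Phi; apply/funext => k.
  rewrite /y /proj_seq /unit_seq; case: ltnP => [kn|nk].
    by rewrite ltn_eqF // subr0 addr0 normr1.
  by case: eqP; rewrite ?sub0r ?normrN ?normr1 ?add0r ?subr0 ?normr0.
have proj_mid : proj_seq R n = fun k => 2^-1 * (proj_seq R n.+1 k + y k).
  by apply/funext => k; rewrite proj_seqS /y; field.
rewrite /normP -/(proj_seq R n) proj_mid Phi_scale; last first.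
  exact: finsuppD (finsupp_proj_seq R n.+1) y_fin.
apply: le_trans (ler_wpM2l _ (Phi_triangle (finsupp_proj_seq R n.+1) y_fin)) _.
  by rewrite normr_ge0.
rewrite Phi_y ger0_norm ?invr_ge0 ?ler0n // -/(normP Phi n.+1); lra.
Qed.

Lemma normP_nondecreasing : nondecreasing_seq (normP Phi).
Proof. exact/nondecreasing_seqP/normP_le_succ. Qed.

Lemma normP1 : normP Phi 1 = 1.
Proof. by rewrite -(Phi_unit_seq 0); congr Phi; apply/funext => -[]. Qed.

Lemma normP_ge1 n : (0 < n)%N -> 1 <= normP Phi n.
Proof. by move=> n0; rewrite -normP1; apply: normP_nondecreasing. Qed.

Lemma normP_gt0 n : (0 < n)%N -> 0 < normP Phi n.
Proof. by move/normP_ge1; apply: lt_le_trans. Qed.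

Lemma normP_le_nat n : normP Phi n <= n%:R.
Proof.
elim: n => [|n IH]; first by rewrite normP0.
by apply: le_trans (normP_succ_le n) _; rewrite -natr1 lerD2r.
Qed.

(* A 1 at position N is swapped into a 0 below N; if there is none, x = P_(N+1). *)
Lemma Phi_zero_one N x : (forall k, x k = 0 \/ x k = 1) ->
  (forall k, (N <= k)%N -> x k = 0) -> Phi x = normP Phi (supp_count x N).
Proof.
elim: N x => [|N IH] x x01 xN.
  by rewrite /supp_count big_ord0; congr Phi; apply/funext => k; rewrite xN.
have x_fin : finsupp x by exists N.+1.
have countS : supp_count x N.+1 = (supp_count x N + (x N != 0%R))%N.
  by rewrite /supp_count big_ord_recr.
have [xN0|xN1] := x01 N.
  rewrite countS xN0 eqxx addn0; apply: IH => // k.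
  by rewrite leq_eqVlt => /predU1P[<-|/xN].
have [/existsP[j /eqP xj0]|] := boolP [exists j : 'I_N, x j == 0%R].
  pose z := x \o swapn j N.
  have swapnN : swapn j N N = j by rewrite /swapn gtn_eqF ?eqxx.
  have z01 k : z k = 0 \/ z k = 1 by apply: x01.
  have zN k : (N <= k)%N -> z k = 0.
    rewrite leq_eqVlt => /predU1P[<-|Nk]; first by rewrite /z /= swapnN.
    by rewrite /z /= /swapn !gtn_eqF ?(ltn_trans (ltn_ord j)) // xN.
  rewrite -(Phi_swapn j N x_fin) -/z (IH z z01 zN); congr normP.
  have <- : supp_count z N.+1 = supp_count x N.+1.
    rewrite /supp_count /z (@sum_swapn (fun k => x k != 0%R : nat)) //.
    exact: ltn_trans (ltn_ord j) _.
  by rewrite /supp_count big_ord_recr /z /= swapnN xj0 eqxx addn0.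
rewrite negb_exists => /forallP x_ne0.
suff -> : x = proj_seq R N.+1 by rewrite supp_count_proj_seq.
apply/funext => k; rewrite /proj_seq ltnS leq_eqVlt; case: ltngtP => [kN|Nk|->] //=.
- by have := x_ne0 (Ordinal kN); case: (x01 k) => -> //; rewrite eqxx.
- by rewrite xN.
Qed.

Lemma Phi_tensor_proj m n :
  Phi (seq_tensor (proj_seq R m) (proj_seq R n)) = normP Phi (m * n).
Proof.
rewrite -(supp_count_tensor_proj R m n); apply: Phi_zero_one; last exact: tensor_proj_out.
by move=> k; rewrite seq_tensor_proj; case: ifP; [right | left].
Qed.

Lemma Phi_ext_tensor_proj m n :
  Phi_ext Phi (seq_tensor (proj_seq R m) (proj_seq R n)) = normP Phi (m * n).
Proof. by rewrite Phi_ext_finsupp ?Phi_tensor_proj //; apply: finsupp_tensor_proj. Qed.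

Lemma normP_submul : cond_star Phi ->
  exists2 c, 0 < c & forall m n, normP Phi (m * n) <= c * normP Phi m * normP Phi n.
Proof.
move=> [c [_ star]].
have submul m n : normP Phi (m * n) <= c * normP Phi m * normP Phi n.
  have [_] := star _ _ (snum_seq_proj Phi m) (snum_seq_proj Phi n).
  by rewrite Phi_ext_tensor_proj !Phi_ext_proj.
exists c => //; have := submul 1%N 1%N; rewrite normP1 !mulr1; exact: lt_le_trans ltr01.
Qed.

Lemma normP_supermul : cond_star2 Phi ->
  exists2 c, 0 < c & forall m n, c * normP Phi m * normP Phi n <= normP Phi (m * n).
Proof.
move=> [c [c_gt0 star2]]; exists c => // m n.
have := star2 _ _ (snum_seq_proj Phi m) (snum_seq_proj Phi n)
  (in_cPhi_finsupp Phi (finsupp_tensor_proj R m n)).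
by rewrite Phi_ext_tensor_proj !Phi_ext_proj.
Qed.

Lemma ln_normP_ge0 n : 0 <= ln (normP Phi n).
Proof. by case: n => [|n]; [rewrite normP0 ln0 | apply/ln_ge0/normP_ge1]. Qed.

Lemma ln_normP_nondecreasing :
  {homo (fun n => ln (normP Phi n)) : m n / (m <= n)%N >-> m <= n}.
Proof.
move=> [|m] n mn /=; first by rewrite normP0 ln0 //; exact: ln_normP_ge0.
rewrite ler_ln ?posrE ?normP_gt0 ?(leq_trans _ mn) //; exact: normP_nondecreasing.
Qed.

Lemma ln_normP_le n : ln (normP Phi n) <= ln (n%:R : R).
Proof.
case: n => [|n]; first by rewrite normP0.
by rewrite ler_ln ?posrE ?normP_gt0 ?ltr0n ?normP_le_nat.
Qed.

Lemma ln_normP_ratio_ge0 n : 0 <= ln (normP Phi n) / ln (n%:R : R).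
Proof. by rewrite divr_ge0 ?ln_normP_ge0 ?natr_ln_ge0. Qed.

Lemma ln_normP_ratio_le1 n : ln (normP Phi n) / ln (n%:R : R) <= 1.
Proof.
have [->|lnn_neq0] := eqVneq (ln (n%:R : R)) 0; first by rewrite invr0 mulr0.
have lnn_gt0 : 0 < ln (n%:R : R) by rewrite lt_neqAle eq_sym lnn_neq0 natr_ln_ge0.
by rewrite ler_pdivrMr // mul1r ln_normP_le.
Qed.

Lemma ln_normP_submul : cond_star Phi -> exists C, forall m n, (0 < m)%N -> (0 < n)%N ->
  ln (normP Phi (m * n)) <= ln (normP Phi m) + ln (normP Phi n) + C.
Proof.
move=> /normP_submul[c c_gt0 submul]; exists (ln c) => m n m0 n0.
have Pm := normP_gt0 m0; have Pn := normP_gt0 n0.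
have Pmn : 0 < normP Phi (m * n) by rewrite normP_gt0 // muln_gt0 m0.
suff : ln (normP Phi (m * n)) <= ln c + ln (normP Phi m) + ln (normP Phi n) by lra.
by rewrite -lnM3 // ler_ln ?posrE ?mulr_gt0.
Qed.

Lemma ln_normP_supermul : cond_star2 Phi -> exists C, forall m n, (0 < m)%N -> (0 < n)%N ->
  ln (normP Phi m) + ln (normP Phi n) - C <= ln (normP Phi (m * n)).
Proof.
move=> /normP_supermul[c c_gt0 supermul]; exists (- ln c) => m n m0 n0.
have Pm := normP_gt0 m0; have Pn := normP_gt0 n0.
have Pmn : 0 < normP Phi (m * n) by rewrite normP_gt0 // muln_gt0 m0.
suff : ln c + ln (normP Phi m) + ln (normP Phi n) <= ln (normP Phi (m * n)) by lra.
by rewrite -lnM3 // ler_ln ?posrE ?mulr_gt0.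
Qed.

End SymmetricNormingFunction.

Lemma cvg_ln_normP_ratio (R : realType) (Phi : (nat -> R) -> R) :
  is_snf Phi -> cond_star Phi \/ cond_star2 Phi ->
  exists l : R, ln (normP Phi n) / ln (n%:R : R) @[n --> \oo] --> l.
Proof.
move=> Phi_snf [star|star2].
  have [C submul] := ln_normP_submul Phi_snf star.
  apply: (@cvg_ln_ratio_nondecreasing _ _ C 0 submul); last exact: ln_normP_nondecreasing.
  exact: ln_normP_ratio_ge0.
have [C supermul] := ln_normP_supermul Phi_snf star2.
have [l ratio_cvg] : exists l : R, - ln (normP Phi n) / ln (n%:R : R) @[n --> \oo] --> l.
  apply: (@cvg_ln_ratio_nonincreasing _ _ C (-1)).
  - by move=> m n m0 n0; have := supermul m n m0 n0; lra.
  - by move=> n; rewrite mulNr lerN2 ln_normP_ratio_le1.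
  - by move=> m n mn; rewrite lerN2; apply: ln_normP_nondecreasing.
exists (- l); apply/cvgNP; rewrite opprK; apply: cvg_trans ratio_cvg.
by apply: near_eq_cvg; near=> n; rewrite /= mulNr.
Unshelve. all: end_near.
Qed.

Lemma pratio_einv (R : realType) (Phi : (nat -> R) -> R) n : (1 < n)%N ->
  pratio Phi n = einv (ln (normP Phi n) / ln (n%:R : R)).
Proof.
move=> n1; have lnn_neq0 := gt_eqF (natr_ln_gt0 R n1).
by rewrite /pratio /einv mulf_eq0 invr_eq0 lnn_neq0 orbF invf_div.
Qed.

Theorem lemma5p1 (R : realType) (Phi : (nat -> R) -> R) :
  is_snf Phi -> cond_star Phi \/ cond_star2 Phi ->
  exists p : \bar R, (1%:E <= p)%E /\ pratio Phi n @[n --> \oo] --> p.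
Proof.
move=> Phi_snf Phi_cond.
have [l ratio_cvg] := cvg_ln_normP_ratio Phi_snf Phi_cond.
have ratio_ge0 := ln_normP_ratio_ge0 Phi_snf.
exists (einv l); split.
  apply: einv_ge1; rewrite (cvgr_to_ge ratio_cvg (nearW _ ratio_ge0)) /=.
  exact: cvgr_to_le ratio_cvg (nearW _ (ln_normP_ratio_le1 Phi_snf)).
apply: cvg_trans _ (cvg_einv (nearW _ ratio_ge0) ratio_cvg).
apply: near_eq_cvg; near=> n; apply/esym/pratio_einv; near: n; exact: nbhs_infty_gt.
Unshelve. all: end_near.
Qed.
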